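(* Let $X$ be a finite graph. If $X$ has a maximal (with respect to inclusion) $\epsilon$-Følner set $F$ that is $\alpha$-small for some $\alpha<\frac{1}{2}$, then there exists $\delta=\delta(\epsilon,\alpha)$ such that $X$ can be decomposed as $X=F\sqcup Y_1\sqcup\cdots \sqcup Y_k$ where the graphs $Y_i$ are $\delta$-expanders and are $(\frac{1}{2}-\alpha)$-big in $X$.
   Context: Graphs are finite with no multiple edges nor loops. For $A\subseteq X$, $\partial A$ is the set of edges joining $A$ to $X\smallsetminus A$. A non-empty $A\subset X$ is an $\epsilon$-Følner set if $|A|\leq\frac12|X|$ and $|\partial A|\leq\epsilon|A|$. $X$ is an $\epsilon$-expander if it has no $\epsilon$-Følner sets. A decomposition means the pieces are induced subgraphs on a partition of the vertex set. $A$ is $\alpha$-big in $X$ if $|A|\geq\alpha|X|$, $\alpha$-small if $|A|<\alpha|X|$. *)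

From HB Require Import structures.
From mathcomp Require Import all_boot all_order all_algebra.
From mathcomp Require Import reals.
Set Implicit Arguments. Unset Strict Implicit. Unset Printing Implicit Defensive.
Import Order.TTheory GRing.Theory Num.Theory.
Local Open Scope ring_scope.

Section Graphs.
Variable T : finType.
Variable e : rel T.

Definition simple_graph : Prop := symmetric e /\ irreflexive e.

(* Edge boundary of A inside the induced subgraph on V: edges joining A to
   V \ A.  Each undirected edge {x,y} with x in A, y in V\A is counted once
   as the ordered pair (x,y). *)
Definition boundary (V A : {set T}) : {set T * T} :=
  [set p : T * T | [&& p.1 \in A, p.2 \in V :\: A & e p.1 p.2]].

Definition folner {R : realType} (V : {set T}) (eps : R) (A : {set T}) : Prop :=
  [/\ A != set0, A \subset V, (2 * #|A| <= #|V|)%N &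
      (#|boundary V A|%:R <= eps * #|A|%:R)].

Definition expander {R : realType} (V : {set T}) (eps : R) : Prop :=
  forall A : {set T}, ~ folner V eps A.

Definition maximal_folner {R : realType} (eps : R) (F : {set T}) : Prop :=
  folner [set: T] eps F /\
  forall B : {set T}, F \proper B -> ~ folner [set: T] eps B.

Definition small {R : realType} (alpha : R) (A : {set T}) : Prop :=
  #|A|%:R < alpha * #|T|%:R.
Definition big {R : realType} (alpha : R) (A : {set T}) : Prop :=
  alpha * #|T|%:R <= #|A|%:R.

End Graphs.

From HB Require Import structures.
From mathcomp Require Import all_boot all_order all_algebra.
From mathcomp Require Import reals.
From mathcomp Require Import zify ring lra.
Set Implicit Arguments. Unset Strict Implicit. Unset Printing Implicit Defensive.
Import Order.TTheory GRing.Theory Num.Theory.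

(* Let Y be the complement of F and c = (1/2 - alpha)|X|.  Among the partitions
   of Y into blocks of size at least c, pick one maximising
   Phi = sum over blocks B of (e(B, B) + lambda), where e(B, B) counts the
   ordered pairs of adjacent vertices of B and lambda = (1/2 - alpha)^2 eps |X|;
   take delta = lambda / (4|X|).  If a block P had a delta-Folner set A, Phi
   could be increased:
   - if |A| >= c, splitting P into A and P \ A gains lambda - 2 e(A, P \ A) > 0;
   - otherwise F u A is still smaller than |X|/2, so by maximality of F it is not
     eps-Folner, and A sends more than (eps - delta)|A| edges to the other blocks.
     These have size at least c, so one of them, Q, receives a (1/2 - alpha)
     fraction of those edges, and moving A to Q gains; if P \ A is also smaller
     than c, the same holds for P \ A, and merging all of P into Q gains. *)

Lemma big_setU_disjoint (R : Type) (idx : R) (op : Monoid.com_law idx)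
    (I : finType) (A B : {set I}) (F : I -> R) :
  [disjoint A & B] ->
  \big[op/idx]_(i in A :|: B) F i =
    op (\big[op/idx]_(i in A) F i) (\big[op/idx]_(i in B) F i).
Proof. by move=> dAB; rewrite -bigU //; apply: eq_bigl => x; rewrite !inE. Qed.

Lemma cards_disjU (T : finType) (A B : {set T}) :
  [disjoint A & B] -> #|A :|: B| = #|A| + #|B|.
Proof. by move=> dAB; apply/eqP; rewrite (leq_card_setU A B).2. Qed.

Lemma setUD_subset (T : finType) (A B : {set T}) : A \subset B -> A :|: B :\: A = B.
Proof. by move=> sAB; rewrite -{2}(setID B A) (setIidPr sAB). Qed.

Lemma disjoint_setD (T : finType) (A B : {set T}) : [disjoint A & B :\: A].
Proof. by rewrite disjoint_sym disjoints_subset subsetDr. Qed.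

Lemma cards_subset_split (T : finType) (A B : {set T}) :
  A \subset B -> #|B| = #|A| + #|B :\: A|.
Proof. by move=> sAB; rewrite -(cardsID A B) (setIidPr sAB). Qed.

Lemma leq_card_setD_half (T : finType) (A B : {set T}) :
  A \subset B -> 2 * #|A| <= #|B| -> #|A| <= #|B :\: A|.
Proof. by move=> sAB; rewrite (cards_subset_split sAB); lia. Qed.

Section EdgeCount.
Variables (T : finType) (e : rel T).
Implicit Types U V W A P Y : {set T}.

Definition nedges U V : nat := \sum_(x in U) \sum_(y in V) e x y.

Lemma nedges0r U : nedges U set0 = 0.
Proof. by rewrite /nedges big1 // => x _; rewrite big_set0. Qed.

Lemma nedgesUl U1 U2 V :
  [disjoint U1 & U2] -> nedges (U1 :|: U2) V = nedges U1 V + nedges U2 V.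
Proof. exact: big_setU_disjoint. Qed.

Lemma nedgesUr U V1 V2 :
  [disjoint V1 & V2] -> nedges U (V1 :|: V2) = nedges U V1 + nedges U V2.
Proof.
by move=> dV; rewrite -big_split; apply: eq_bigr => x _; rewrite big_setU_disjoint.
Qed.

Lemma nedgesSr U V W : V \subset W -> nedges U V <= nedges U W.
Proof.
move=> sVW; rewrite -(setUD_subset sVW) nedgesUr ?disjoint_setD //.
exact: leq_addr.
Qed.

Lemma nedges_setD_nested U A P Y : A \subset P -> P \subset Y ->
  nedges U (Y :\: A) = nedges U (P :\: A) + nedges U (Y :\: P).
Proof.
move=> sAP sPY; rewrite -nedgesUr; last first.
  rewrite disjoint_sym disjoints_subset (subset_trans (subsetDr Y P)) //.
  by rewrite setCS subsetDl.
congr nedges; apply/setP => x; rewrite !inE.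
have [xP | xNP] := boolP (x \in P); first by rewrite (subsetP sPY x xP) andbT orbF.
have xNA : x \notin A by apply: contra xNP; apply: subsetP.
by rewrite xNA.
Qed.

Lemma card_boundary V A : #|boundary e V A| = nedges A (V :\: A).
Proof.
rewrite /nedges pair_big -sum1_card big_mkcond [RHS]big_mkcond /=.
apply: eq_bigr => -[x y] _; rewrite inE /=.
by case: (x \in A); case: (y \in V :\: A); case: (e x y).
Qed.

Hypothesis e_sym : symmetric e.

Lemma nedgesC U V : nedges U V = nedges V U.
Proof.
by rewrite /nedges exchange_big; apply: eq_bigr => x _; apply: eq_bigr => y _; rewrite e_sym.
Qed.

Lemma nedgesUU U V : [disjoint U & V] ->
  nedges (U :|: V) (U :|: V) = nedges U U + nedges V V + 2 * nedges U V.
Proof. by move=> dUV; rewrite nedgesUl // !nedgesUr // (nedgesC V U); lia. Qed.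

Lemma nedges_subset_split A P : A \subset P ->
  nedges P P = nedges A A + nedges (P :\: A) (P :\: A) + 2 * nedges A (P :\: A).
Proof. by move=> sAP; rewrite -nedgesUU ?disjoint_setD // setUD_subset. Qed.

End EdgeCount.

Lemma exists_heavy_index (I : finType) (P : pred I) (h s : I -> nat) :
  0 < \sum_(i | P i) h i ->
  exists2 i, P i && (0 < h i) & (\sum_(i | P i) h i) * s i <= h i * \sum_(i | P i) s i.
Proof.
set H := \sum_(i | P i) h i; set S := \sum_(i | P i) s i => H_gt0.
have [/existsP[i /and3P[Pi hi_gt0 hi]] | /existsPn light] :=
  boolP [exists i, [&& P i, 0 < h i & H * s i <= h i * S]].
  by exists i; rewrite ?Pi.
have bound i : P i -> h i * S + (0 < h i) <= H * s i.
  move=> Pi; have := light i; rewrite Pi /=.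
  by case: posnP => [-> | _]; rewrite ?mul0n //= -ltnNge addn1.
have : \sum_(i | P i) (h i * S + (0 < h i)) <= \sum_(i | P i) H * s i.
  exact: leq_sum.
rewrite big_split /= -big_distrl -big_distrr /= -/H -/S.
rewrite -[X in _ <= X]addn0 leq_add2l leqn0 sum_nat_eq0 => /forall_inP h_eq0.
suff H_eq0 : H = 0 by rewrite H_eq0 in H_gt0.
by rewrite /H big1 // => i /h_eq0; case: (h i).
Qed.

Section Labelings.
Variables (T : finType) (Y : {set T}) (n : nat).
Implicit Types (g : {ffun T -> 'I_n}) (S : {set T}).

Definition block g i := [set x in Y | g x == i].

Definition relabel g S l : {ffun T -> 'I_n} := [ffun x => if x \in S then l else g x].

Lemma block_sub g i : block g i \subset Y.
Proof. by apply/subsetP => x; rewrite inE => /andP[]. Qed.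

Lemma block_disjoint g i j : i != j -> [disjoint block g i & block g j].
Proof.
move=> ij; rewrite -setI_eq0; apply/eqP/setP => x; rewrite !inE.
by apply/negP => /andP[/andP[_ /eqP gxi] /andP[_ /eqP gxj]]; rewrite -gxi -gxj eqxx in ij.
Qed.

Lemma sum_card_block g : \sum_i #|block g i| = #|Y|.
Proof.
rewrite -sum1_card (partition_big g xpredT) //=.
by apply: eq_bigr => i _; rewrite -sum1_card; apply: eq_bigl => x; rewrite inE.
Qed.

Lemma exists_empty_block g : #|Y| < n -> exists l, block g l = set0.
Proof.
move=> Y_lt_n; have [l /eqP | nonempty] := pickP (fun l => block g l == set0).
  by exists l.
have : \sum_(i < n) 1 <= \sum_i #|block g i|.
  by apply: leq_sum => i _; rewrite card_gt0 nonempty.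
by rewrite sum_card_block sum1_card card_ord leqNgt Y_lt_n.
Qed.

Lemma nedges_setD_block (e : rel T) g j U :
  nedges e U (Y :\: block g j) = \sum_(i | i != j) nedges e U (block g i).
Proof.
rewrite /nedges [RHS]exchange_big /=; apply: eq_bigr => x _.
rewrite (partition_big g (fun i => i != j)) /=; last first.
  by move=> y; rewrite !inE negb_and => /andP[/orP[/negPf-> |] //].
apply: eq_bigr => i ij; apply: eq_bigl => y; rewrite !inE.
by case: (g y =P i) => [-> | _]; rewrite ?andbF ?andbT // (negPf ij) andbF.
Qed.

Lemma block_relabel g S j l i : S \subset block g j ->
  block (relabel g S l) i = if i == l then block g l :|: S else block g i :\: S.
Proof.
move=> sS; apply/setP => x.
have SY : x \in S -> x \in Y by move=> xS; apply/(subsetP (block_sub g j))/(subsetP sS).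
case: (i =P l) => [-> | /eqP il]; rewrite !inE ffunE; case xS: (x \in S) => /=.
- by rewrite SY // eqxx orbT.
- by rewrite orbF.
- by rewrite eq_sym (negPf il) andbF.
- by [].
Qed.

Lemma block_relabel_other g S j l i : S \subset block g j -> i != j -> i != l ->
  block (relabel g S l) i = block g i.
Proof.
move=> sS ij il; rewrite (block_relabel _ _ sS) (negPf il).
apply/setDidPl; rewrite disjoint_sym; apply: disjointWl sS _.
by apply: block_disjoint; rewrite eq_sym.
Qed.

Local Open Scope ring_scope.
Variables (R : comPzRingType) (w : {set T} -> R).

Definition potential g : R := \sum_i w (block g i).

Lemma potential_relabel g S j l : S \subset block g j -> j != l ->
  potential (relabel g S l) = potential g - w (block g j) - w (block g l)
     + w (block g j :\: S) + w (block g l :|: S).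
Proof.
move=> sS jl; rewrite /potential (bigD1 j) // (bigD1 l) 1?eq_sym //=.
rewrite [in RHS](bigD1 j) // [in RHS](bigD1 l) 1?eq_sym //=.
rewrite !(block_relabel _ _ sS) (negPf jl) eqxx.
under eq_bigr => i /andP[ij il] do rewrite (block_relabel_other sS ij il).
set rest := \sum_(i | _) _; ring.
Qed.

End Labelings.

Local Open Scope ring_scope.

Lemma maximal_folner_expansion (R : realType) (T : finType) (e : rel T) (eps : R)
    (F A : {set T}) :
  maximal_folner e eps F -> [disjoint F & A] -> A != set0 ->
  (2 * #|F :|: A| <= #|T|)%N ->
  eps * #|A|%:R < (nedges e A (~: (F :|: A)))%:R.
Proof.
move=> [[_ _ _ F_bd] F_max] dFA A_neq0 FA_half; rewrite ltNge; apply/negP => A_bd.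
apply: (F_max (F :|: A)).
  apply: properUl; apply: contra A_neq0 => sAF; apply/eqP.
  by rewrite -(setIidPl sAF) disjoint_setI0 // disjoint_sym.
split.
- by rewrite -card_gt0 cards_disjU // addn_gt0 (card_gt0 A) A_neq0 orbT.
- exact: subsetT.
- by rewrite cardsT.
rewrite card_boundary setTD nedgesUl // cards_disjU // !natrD mulrDr.
have : (nedges e F (~: (F :|: A)) <= nedges e F (~: F))%N.
  by rewrite nedgesSr // setCS subsetUl.
rewrite -(ler_nat R); move: F_bd; rewrite card_boundary setTD; lra.
Qed.

Section Decomposition.
Variables (R : realType) (eps alpha : R).
Hypotheses (eps_gt0 : 0 < eps) (alpha_lt_half : alpha < 1 / 2).

Definition beta : R := 1 / 2 - alpha.
Definition delta : R := beta ^+ 2 * eps / 4.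

Lemma beta_gt0 : 0 < beta.
Proof. by rewrite subr_gt0. Qed.

Lemma delta_gt0 : 0 < delta.
Proof. by rewrite divr_gt0 // mulr_gt0 // exprn_gt0 // beta_gt0. Qed.

Section ComplementOfMaximalFolner.
Variables (T : finType) (e : rel T) (F : {set T}).
Hypotheses (e_sym : symmetric e) (F_max : maximal_folner e eps F)
  (F_small : small alpha F).

Let N := #|T|.
Let Y := ~: F.
Let c := beta * N%:R.
Let lambda := 4 * delta * N%:R.
(* Partitions of Y are encoded by labelings, with blocks the fibres in Y; as
   there are more labels than vertices, some label is always unused. *)
Let n := N.+1.
Implicit Types (A B P S U : {set T}) (g : {ffun T -> 'I_n}).

Lemma N_gt0 : (0 < N)%N.
Proof.
by case: F_max => -[F_neq0 _ _ _] _; rewrite (leq_trans _ (max_card F)) ?card_gt0.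
Qed.

Lemma alpha_gt0 : 0 < alpha.
Proof.
case: F_max => -[F_neq0 _ _ _] _; have : 0 < #|F|%:R :> R by rewrite ltr0n card_gt0.
move: F_small; rewrite /small => F_lt.
by move=> /lt_trans/(_ F_lt); rewrite pmulr_lgt0 // ltr0n N_gt0.
Qed.

Lemma beta_lt_half : beta < 1 / 2.
Proof. by rewrite /beta; have := alpha_gt0; lra. Qed.

Lemma delta_lt_move_gain : delta < beta * (eps - delta).
Proof.
have b_gt0 := beta_gt0; have b_lt := beta_lt_half.
have : 0 < beta * eps * (1 - beta / 4 - beta ^+ 2 / 4) by rewrite !mulr_gt0 //; nra.
rewrite /delta; nra.
Qed.

Lemma delta_le_merge_gain : 4 * delta <= 2 * beta ^+ 2 * (eps - delta).
Proof.
have b_gt0 := beta_gt0; have b_lt := beta_lt_half.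
have : 0 <= beta ^+ 2 * eps * (1 - beta ^+ 2 / 2) by rewrite !mulr_ge0 ?ltW //; nra.
rewrite /delta; nra.
Qed.

Lemma delta_lt_eps : delta < eps.
Proof. have := delta_lt_move_gain; have := delta_gt0; have := beta_gt0; nra. Qed.

Lemma c_gt0 : 0 < c.
Proof. by rewrite mulr_gt0 ?beta_gt0 // ltr0n N_gt0. Qed.

Lemma small_subset_expands A : A \subset Y -> A != set0 -> #|A|%:R < c ->
  eps * #|A|%:R < (nedges e A (Y :\: A))%:R.
Proof.
move=> sAY A_neq0 A_lt_c.
have dFA : [disjoint F & A] by rewrite disjoint_sym disjoints_subset.
rewrite setDE -setCU; apply: maximal_folner_expansion => //.
have : (2 * #|F :|: A|)%:R < N%:R :> R.
  by rewrite cards_disjU // natrM natrD; move: F_small A_lt_c; rewrite /small /c /beta; lra.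
by rewrite ltr_nat => /ltnW.
Qed.

Lemma small_part_leaks A P : A \subset P -> P \subset Y -> A != set0 -> #|A|%:R < c ->
  (nedges e A (P :\: A))%:R <= delta * #|A|%:R ->
  (eps - delta) * #|A|%:R < (nedges e A (Y :\: P))%:R.
Proof.
move=> sAP sPY A_neq0 A_lt_c A_bd.
have := small_subset_expands (subset_trans sAP sPY) A_neq0 A_lt_c.
by rewrite (nedges_setD_nested _ _ sAP sPY) natrD mulrBl; lra.
Qed.

Definition admissible g : bool :=
  [forall i, (block Y g i != set0) ==> (c <= #|block Y g i|%:R)].

Lemma admissible_block g i : admissible g -> block Y g i != set0 -> c <= #|block Y g i|%:R.
Proof. by move=> /forallP /(_ i) /implyP. Qed.

Lemma admissible_relabel g S j l : admissible g -> S \subset block Y g j -> j != l ->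
  (block Y g j :\: S != set0 -> c <= #|block Y g j :\: S|%:R) ->
  c <= #|block Y g l :|: S|%:R -> admissible (relabel g S l).
Proof.
move=> g_adm sS jl Pj_adm Pl_adm; apply/forallP => i; apply/implyP.
have [-> | il] := eqVneq i l; first by rewrite (block_relabel _ _ sS) eqxx.
have [-> | ij] := eqVneq i j; first by rewrite (block_relabel _ _ sS) (negPf jl).
by rewrite (block_relabel_other sS ij il); apply: admissible_block.
Qed.

Definition weight B : R :=
  if B == set0 then 0 else (nedges e B B)%:R + lambda.

Lemma weight0 : weight set0 = 0.
Proof. by rewrite /weight eqxx. Qed.

Lemma weight_neq0 B : B != set0 -> weight B = (nedges e B B)%:R + lambda.
Proof. by rewrite /weight => /negPf ->. Qed.

Let Phi g := potential Y weight g.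

Definition improvable g : Prop :=
  exists2 g', admissible g' & Phi g < Phi g'.

Lemma exists_heavy_block g j U : admissible g ->
  (0 < nedges e U (Y :\: block Y g j))%N ->
  exists2 l, (l != j) && (block Y g l != set0) &
    beta * (nedges e U (Y :\: block Y g j))%:R <= (nedges e U (block Y g l))%:R.
Proof.
move=> g_adm; rewrite nedges_setD_block => S_gt0.
have [l /andP[lj h_gt0] heavy] := exists_heavy_index (fun i => #|block Y g i|) S_gt0.
have Bl_neq0 : block Y g l != set0 by apply: contraTneq h_gt0 => ->; rewrite nedges0r.
exists l; first by rewrite lj.
set S := \sum_(i | i != j) _ in heavy *; set h := nedges e U _ in heavy *.
have others_le_N : (\sum_(i | i != j) #|block Y g i| <= N)%N.
  apply: leq_trans (max_card Y).
  by rewrite -(sum_card_block Y g) [leqRHS](bigD1 j) //= leq_addl.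
have : (S * #|block Y g l| <= h * N)%N.
  by apply: leq_trans heavy _; rewrite leq_mul2l others_le_N orbT.
have N_pos : 0 < N%:R :> R by rewrite ltr0n N_gt0.
rewrite -(ler_nat R) !natrM => heavyR.
rewrite -(ler_pM2r N_pos); apply: le_trans heavyR.
rewrite mulrAC -/c mulrC; apply: ler_wpM2l => //.
exact: admissible_block.
Qed.

Lemma split_improves g j A : admissible g -> A \subset block Y g j ->
  (2 * #|A| <= #|block Y g j|)%N -> c <= #|A|%:R ->
  (nedges e A (block Y g j :\: A))%:R <= delta * #|A|%:R -> improvable g.
Proof.
move=> g_adm sAP A_half A_ge_c A_bd; set P := block Y g j in sAP A_half A_bd *.
have A_neq0 : A != set0.
  by rewrite -card_gt0 -(ltr0n R); apply: lt_le_trans A_ge_c; apply: c_gt0.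
have A_le_PA := leq_card_setD_half sAP A_half.
have PA_neq0 : P :\: A != set0.
  by rewrite -card_gt0 (leq_trans _ A_le_PA) // card_gt0.
have P_neq0 : P != set0.
  by rewrite -card_gt0 (cards_subset_split sAP) addn_gt0 card_gt0 A_neq0.
have [l Bl_eq0] : exists l, block Y g l = set0.
  by apply: exists_empty_block; rewrite ltnS max_card.
have jl : j != l by apply: contra_neq P_neq0 => jl; rewrite /P jl Bl_eq0.
exists (relabel g A l).
  apply: (admissible_relabel g_adm sAP jl); last by rewrite Bl_eq0 set0U.
  by move=> _; apply: le_trans A_ge_c _; rewrite ler_nat.
rewrite /Phi (potential_relabel _ sAP jl) Bl_eq0 set0U weight0.
rewrite (weight_neq0 P_neq0) (weight_neq0 PA_neq0) (weight_neq0 A_neq0).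
rewrite (nedges_subset_split e_sym sAP) !natrD.
have : delta * (2 * #|A|)%:R <= delta * N%:R.
  by rewrite ler_wpM2l ?(ltW delta_gt0) // ler_nat (leq_trans A_half) ?max_card.
have := delta_gt0; have : 0 < N%:R :> R by rewrite ltr0n N_gt0.
rewrite /lambda natrM; nra.
Qed.

Lemma move_improves g j A : admissible g -> A \subset block Y g j -> A != set0 ->
  c <= #|block Y g j :\: A|%:R ->
  (nedges e A (block Y g j :\: A))%:R <= delta * #|A|%:R ->
  (eps - delta) * #|A|%:R < (nedges e A (Y :\: block Y g j))%:R -> improvable g.
Proof.
move=> g_adm sAP A_neq0 PA_ge_c A_bd A_leak.
set P := block Y g j in sAP PA_ge_c A_bd A_leak *.
have A_gt0 : 0 < #|A|%:R :> R by rewrite ltr0n card_gt0.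
have eps_delta_gt0 : 0 < eps - delta by rewrite subr_gt0 delta_lt_eps.
have leak_gt0 : (0 < nedges e A (Y :\: P))%N.
  by rewrite -(ltr0n R); apply: le_lt_trans A_leak; rewrite mulr_ge0 ?ltW.
have [l /andP[lj Bl_neq0] Bl_heavy] := exists_heavy_block g_adm leak_gt0.
have jl : j != l by rewrite eq_sym.
have dBlA : [disjoint block Y g l & A].
  by rewrite disjoint_sym; apply: disjointWl sAP (block_disjoint _ _ jl).
have PA_neq0 : P :\: A != set0.
  by rewrite -card_gt0 -(ltr0n R); apply: lt_le_trans PA_ge_c; apply: c_gt0.
have P_neq0 : P != set0 by apply: contraNneq PA_neq0 => ->; rewrite set0D.
have BlA_neq0 : block Y g l :|: A != set0 by rewrite setU_eq0 negb_and A_neq0 orbT.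
exists (relabel g A l).
  apply: (admissible_relabel g_adm sAP jl) => //.
  apply: le_trans (admissible_block g_adm Bl_neq0) _.
  by rewrite ler_nat subset_leq_card // subsetUl.
rewrite /Phi (potential_relabel _ sAP jl) (weight_neq0 P_neq0) (weight_neq0 Bl_neq0).
rewrite (weight_neq0 PA_neq0) (weight_neq0 BlA_neq0).
rewrite (nedges_subset_split e_sym sAP) (nedgesUU e_sym dBlA) (nedgesC e_sym _ A).
rewrite !natrD.
have : beta * ((eps - delta) * #|A|%:R) < beta * (nedges e A (Y :\: P))%:R.
  by rewrite ltr_pM2l // beta_gt0.
have : delta * #|A|%:R < beta * ((eps - delta) * #|A|%:R).
  by rewrite mulrA ltr_pM2r // delta_lt_move_gain.
lra.
Qed.

Lemma merge_improves g j : admissible g -> block Y g j != set0 ->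
  (eps - delta) * #|block Y g j|%:R < (nedges e (block Y g j) (Y :\: block Y g j))%:R ->
  improvable g.
Proof.
move=> g_adm P_neq0 P_leak; set P := block Y g j in P_neq0 P_leak *.
have P_ge_c : c <= #|P|%:R := admissible_block g_adm P_neq0.
have eps_delta_gt0 : 0 < eps - delta by rewrite subr_gt0 delta_lt_eps.
have leak_gt0 : (0 < nedges e P (Y :\: P))%N.
  by rewrite -(ltr0n R); apply: le_lt_trans P_leak; rewrite mulr_ge0 // ltW.
have [l /andP[lj Bl_neq0] Bl_heavy] := exists_heavy_block g_adm leak_gt0.
have jl : j != l by rewrite eq_sym.
have dBlP : [disjoint block Y g l & P] by apply: block_disjoint; rewrite eq_sym.
have BlP_neq0 : block Y g l :|: P != set0 by rewrite setU_eq0 negb_and P_neq0 orbT.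
exists (relabel g P l).
  apply: (admissible_relabel g_adm (subxx P) jl); first by rewrite setDv eqxx.
  apply: le_trans (admissible_block g_adm Bl_neq0) _.
  by rewrite ler_nat subset_leq_card // subsetUl.
rewrite /Phi (potential_relabel _ (subxx P) jl) setDv weight0.
rewrite (weight_neq0 P_neq0) (weight_neq0 Bl_neq0) (weight_neq0 BlP_neq0).
rewrite (nedgesUU e_sym dBlP) (nedgesC e_sym _ P) !natrD.
have : beta * ((eps - delta) * #|P|%:R) < beta * (nedges e P (Y :\: P))%:R.
  by rewrite ltr_pM2l // beta_gt0.
have : beta * ((eps - delta) * c) <= beta * ((eps - delta) * #|P|%:R).
  by rewrite !ler_pM2l ?beta_gt0.
have : lambda <= 2 * (beta * ((eps - delta) * c)).
  have := ler_wpM2r (ler0n R N) delta_le_merge_gain.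
  by rewrite /lambda /c expr2; lra.
have : 0 <= (nedges e (block Y g l) (block Y g l))%:R :> R by [].
lra.
Qed.

Lemma maximal_potential_blocks_expand g j : admissible g ->
  (forall g', admissible g' -> Phi g' <= Phi g) -> expander e (block Y g j) delta.
Proof.
move=> g_adm g_max A [A_neq0 sAP A_half A_bd].
suff [g' /g_max] : improvable g by rewrite leNgt => /negP.
set P := block Y g j in sAP A_half A_bd *; rewrite card_boundary in A_bd.
have sPY : P \subset Y := block_sub Y g j.
have [A_ge_c | A_lt_c] := leP c #|A|%:R; first exact: split_improves A_half A_ge_c A_bd.
have A_leak := small_part_leaks sAP sPY A_neq0 A_lt_c A_bd.
have [PA_ge_c | PA_lt_c] := leP c #|P :\: A|%:R.
  exact: move_improves A_neq0 PA_ge_c A_bd A_leak.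
have cardP := cards_subset_split sAP.
have A_le_PA := leq_card_setD_half sAP A_half.
have PA_neq0 : P :\: A != set0.
  by rewrite -card_gt0 (leq_trans _ A_le_PA) // card_gt0.
have PA_bd : (nedges e (P :\: A) (P :\: (P :\: A)))%:R <= delta * #|P :\: A|%:R.
  rewrite setDDr setDv set0U (setIidPr sAP) nedgesC //; apply: le_trans A_bd _.
  by rewrite ler_wpM2l ?ler_nat // ltW // delta_gt0.
have PA_leak := small_part_leaks (subsetDl P A) sPY PA_neq0 PA_lt_c PA_bd.
have P_neq0 : P != set0 by rewrite -card_gt0 cardP addn_gt0 card_gt0 A_neq0.
apply: (merge_improves g_adm P_neq0).
rewrite -[in nedges e P _](setUD_subset sAP) nedgesUl ?disjoint_setD // cardP !natrD.
lra.
Qed.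

Lemma admissible_const : admissible [ffun=> ord0].
Proof.
apply/forallP => i; apply/implyP => /set0Pn[x]; rewrite inE ffunE => /andP[_ /eqP i0].
have -> : block Y [ffun=> ord0] i = Y by apply/setP => y; rewrite inE ffunE -i0 eqxx andbT.
have := cardsC F; rewrite -/Y => /(congr1 (fun m => m%:R : R)); rewrite natrD.
have := ler0n R N; move: F_small; rewrite /small /c /beta -/N; lra.
Qed.

Lemma complement_decomposition : exists (k : nat) (Z : 'I_k -> {set T}),
  [/\ F :|: (\bigcup_(i < k) Z i) = [set: T],
      forall i, [disjoint F & Z i],
      forall i j, i != j -> [disjoint Z i & Z j],
      forall i, expander e (Z i) delta &
      forall i, big beta (Z i)].
Proof.
have [g g_adm g_max] := arg_maxP Phi admissible_const.
pose D := [set i | block Y g i != set0].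
have blockD_neq0 (i : 'I_#|D|) : block Y g (enum_val i) != set0.
  by have := enum_valP i; rewrite inE.
exists #|D|, (fun i => block Y g (enum_val i)); split.
- apply/setP => x; rewrite !inE; case xF: (x \in F) => //=.
  have gxD : g x \in D by rewrite inE; apply/set0Pn; exists x; rewrite !inE xF eqxx.
  apply/bigcupP; exists (enum_rank_in gxD (g x)) => //.
  by rewrite enum_rankK_in // !inE xF eqxx.
- by move=> i; rewrite disjoint_sym disjoints_subset block_sub.
- move=> i j ij; apply: block_disjoint; apply: contra ij => /eqP/enum_val_inj ->.
  by rewrite eqxx.
- by move=> i; apply: maximal_potential_blocks_expand.
- by move=> i; apply: admissible_block.
Qed.

End ComplementOfMaximalFolner.
End Decomposition.

Theorem theorem2p2 (R : realType) (eps alpha : R) :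
  0 < eps -> alpha < 1 / 2 ->
  exists2 delta : R, 0 < delta &
    forall (T : finType) (e : rel T) (F : {set T}),
      simple_graph e ->
      maximal_folner e eps F ->
      small alpha F ->
      exists (k : nat) (Y : 'I_k -> {set T}),
        [/\ F :|: (\bigcup_(i < k) Y i) = [set: T],
            forall i, [disjoint F & Y i],
            forall i j, i != j -> [disjoint Y i & Y j],
            forall i, expander e (Y i) delta &
            forall i, big (1 / 2 - alpha) (Y i)].
Proof.
move=> eps_gt0 alpha_lt_half; exists (delta eps alpha); first exact: delta_gt0.
move=> T e F [e_sym _] F_max F_small.
exact: complement_decomposition.
Qed.
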